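(* Let $T=(G,N,\psi)$ be a triple and $T'=(G',N',\psi')$ a linear reduction of $T$, with center $Z'=Z(T')$ and central character $\zeta'$. Then $G'=G(\zeta')$, $N'=N(\zeta')$, and $\psi'$ is the unique irreducible character of $N'$ lying above $\zeta'$ and inducing $\psi$. If moreover $T'$ is a linear limit of $T$ and $N'/Z(T')$ is nilpotent, then $\psi'$ is the only irreducible character of $N'$ lying above $\zeta'$.
   Context: $\mathrm{Irr}(X)$, $\mathrm{Lin}(X)$: complex irreducible, resp. linear, characters of a finite group $X$; $K(\phi)$ is the stabilizer of $\phi$ in $K$. A triple is $T=(G,N,\psi)$ with $G$ finite, $N\trianglelefteq G$, $\psi\in\mathrm{Irr}(N)$. The center $Z(T)$ is the center $Z(\psi^G)=\{g\in G:|\psi^G(g)|=\psi^G(1)\}$ of the induced character $\psi^G$ (a normal subgroup of $G$ contained in $N$), and the central character $\zeta^{(T)}$ is the unique linear character of $Z(T)$ lying under $\psi^G$. If $L\trianglelefteq G$, $L\le N$, and $\lambda\in\mathrm{Lin}(L)$ lies under $\psi$, the direct linear reduction $T(\lambda)$ is $(G(\lambda),N(\lambda),\psi_\lambda)$, where $\psi_\lambda$ is the $\lambda$-Clifford correspondent of $\psi$ (the unique irreducible character of $N(\lambda)$ over $\lambda$ inducing $\psi$); it is proper if $T(\lambda)\neq T$. A linear reduction of $T$ is a triple obtained from $T$ by a finite chain of direct linear reductions; a linear limit is a linear reduction admitting no proper direct linear reduction. *)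

From HB Require Import structures.
From mathcomp Require Import all_boot all_order all_algebra all_fingroup all_solvable all_field all_character.
Set Implicit Arguments. Unset Strict Implicit. Unset Printing Implicit Defensive.
Import GRing.Theory Num.Theory.
Local Open Scope ring_scope.

Record triple (gT : finGroupType) := Triple {
  tG : {group gT};
  tN : {group gT};
  tpsi : 'CF(tN)
}.

Definition is_triple (gT : finGroupType) (T : triple gT) : Prop :=
  (tN T <| tG T)%g /\ tpsi T \in irr (tN T).

Definition lies_under (gT : finGroupType) (L H : {group gT})
  (lam : 'CF(L)) (chi : 'CF(H)) : Prop :=
  '['Res[L] chi, lam] != 0.

Definition tcenter (gT : finGroupType) (T : triple gT) : {group gT} :=
  ('Z('Ind[tG T] (tpsi T))%CF)%G.

(* Direct linear reduction: T' = T(lam) for some linear lam of some L <| G,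
   L <= N, lying under psi; psi' is the lam-Clifford correspondent of psi,
   i.e. the (unique) irreducible character of N(lam) over lam inducing psi. *)
Definition direct_linred (gT : finGroupType) (T T' : triple gT) : Prop :=
  exists (L : {group gT}) (lam : 'CF(L)),
    [/\ (L <| tG T)%g, L \subset tN T, lam \is a linear_char,
        lies_under lam (tpsi T) &
        [/\ tG T' :=: 'I_(tG T)[lam]%g,
        tN T' :=: 'I_(tN T)[lam]%g, tpsi T' \in irr (tN T'), lies_under lam (tpsi T')
          & 'Ind[tN T] (tpsi T') = tpsi T]].

Inductive linred (gT : finGroupType) (T : triple gT) : triple gT -> Prop :=
| linred_refl : linred T T
| linred_step T1 T2 : linred T T1 -> direct_linred T1 T2 -> linred T T2.

Definition linear_limit (gT : finGroupType) (T T' : triple gT) : Prop :=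
  linred T T' /\ forall T'' : triple gT, direct_linred T' T'' -> T'' = T'.

From HB Require Import structures.
From mathcomp Require Import all_boot all_order all_algebra all_fingroup all_solvable all_field all_character.
Set Implicit Arguments. Unset Strict Implicit. Unset Printing Implicit Defensive.
Import GRing.Theory Num.Theory.
Local Open Scope ring_scope.

(* Along a chain of direct linear reductions T = T_0, ..., T_n = T' we keep
   track of the following invariant of T_k: it is a triple with G_k <= G,
   N_k = N :&: G_k and psi_k^N = psi; every element of G fixing an extension of
   the central character zeta_k of T_k to a larger subgroup lies in G_k; and
   psi_k is the only irreducible character of N_k over zeta_k inducing psi.
   It passes from T_k to T_k(lam) because Z(T_k) <= Z(T_k(lam)), L <= Z(T_k(lam))
   and the central character of T_k(lam) extends both zeta_k and lam, after
   which the Clifford correspondence for lam gives uniqueness.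
   If T' is a linear limit, every G'-normal L <= N' carrying a linear
   constituent of psi' lies in Z(T'); when N'/Z(T') is nilpotent this forces
   psi' to vanish off Z(T') (by induction on |N'|, using the preimage of the
   centre of N'/Z(T')), so any irreducible character of N' over zeta' has a
   nonzero inner product with psi'. *)

Section Homogeneous.
Variable gT : finGroupType.
Implicit Types G H M N Y Z : {group gT}.

Definition homogeneous Z H (zeta : 'CF(Z)) (chi : 'CF(H)) : Prop :=
  'Res[Z] chi = chi 1%g *: zeta.

Lemma constt_scale_lin H (zeta : 'CF(H)) (c : algC) i :
  zeta \is a linear_char -> i \in irr_constt (c *: zeta) -> 'chi_i = zeta.
Proof.
move=> Lz; have /irrP[k Dk] := lin_char_irr Lz; rewrite Dk.
rewrite irr_consttE cfdotZl cfdot_irr mulf_eq0 negb_or pnatr_eq0 eqb0 negbK.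
by case/andP=> _ /eqP->.
Qed.

Lemma cfun_constt_lin H (phi zeta : 'CF(H)) : zeta \is a linear_char ->
  (forall i, i \in irr_constt phi -> 'chi_i = zeta) -> phi = phi 1%g *: zeta.
Proof.
move=> Lz Dconstt.
have Dphi: phi = (\sum_(i in irr_constt phi) '[phi, 'chi_i]) *: zeta.
  rewrite {1}[phi]cfun_sum_constt scaler_suml; apply: eq_bigr => i phi_i.
  by rewrite Dconstt.
by rewrite {2}Dphi cfunE lin_char1 // mulr1 -Dphi.
Qed.

Lemma homogeneous_constt_Res M H Z (chi : 'CF(M)) (zeta : 'CF(Z)) j :
  chi \is a character -> Z \subset H -> H \subset M -> zeta \is a linear_char ->
  homogeneous zeta chi -> j \in irr_constt ('Res[H] chi) ->
  homogeneous zeta 'chi[H]_j.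
Proof.
move=> Nchi sZH sHM Lz Dchi Hj.
rewrite /homogeneous -[X in X *: _](cfRes1 Z); apply: cfun_constt_lin => // i Zi.
have := constt_Res_trans (cfRes_char H Nchi) Hj Zi.
by rewrite cfResRes // Dchi; apply: constt_scale_lin.
Qed.

(* [z] lies in the centre of [chi], so it acts as the scalar [zeta z] in any
   representation affording [chi]. *)
Lemma homogeneous_mul M Z (chi : 'CF(M)) (zeta : 'CF(Z)) x z :
  chi \is a character -> Z \subset M -> zeta \is a linear_char ->
  homogeneous zeta chi -> x \in M -> z \in Z -> chi (x * z)%g = zeta z * chi x.
Proof.
move=> Nchi sZM Lz Dchi Mx Zz.
have Mz := subsetP sZM z Zz.
have chiz : chi z = chi 1%g * zeta z by rewrite -(cfResE chi sZM Zz) Dchi cfunE.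
have center_z : z \in 'Z(chi)%CF.
  rewrite char_cfcenterE // chiz normrM (normC_lin_char Lz Zz) mulr1.
  by rewrite ger0_norm // char1_ge0.
have [rG Dchi_rG] := char_reprP Nchi.
move: center_z; rewrite Dchi_rG cfcenter_repr => /setIdP[_ /is_scalar_mxP[c rGz]].
move: chiz; rewrite Dchi_rG !cfunE Mz groupM // Mx !mulrb repr_mxM // rGz.
rewrite mul_mx_scalar mxtraceZ mxtrace_scalar group1 repr_mx1 mxtrace1.
case: rG {Dchi_rG} rGz => n rG /= _.
have [n0 _ | n_gt0 chiz] := posnP n.
  by move: (rG x); rewrite n0 => A; rewrite [A]flatmx0 mxtrace0 !mulr0.
have n_neq0 : (n%:R : algC) != 0 by rewrite pnatr_eq0 -lt0n.
by congr (_ * _); apply: (mulfI n_neq0); rewrite mulr_natl.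
Qed.

Lemma homogeneous_commg_vanish M Z (chi : 'CF(M)) (zeta : 'CF(Z)) x k :
  chi \is a character -> Z \subset M -> zeta \is a linear_char ->
  homogeneous zeta chi -> x \in M -> k \in M -> [~ x, k]%g \in Z ->
  zeta [~ x, k]%g != 1 -> chi x = 0.
Proof.
move=> Nchi sZM Lz Dchi Mx Mk Zxk; apply: contraNeq => chi_x_neq0.
have := homogeneous_mul Nchi sZM Lz Dchi Mx Zxk.
rewrite -conjg_mulR cfunJ // => chi_x; apply/eqP/(mulIf chi_x_neq0).
by rewrite mul1r -chi_x.
Qed.

Lemma homogeneous_cfdot_neq0 H Z (chi : 'CF(H)) (zeta : 'CF(Z)) :
  chi \in irr H -> zeta \is a linear_char -> homogeneous zeta chi ->
  '['Res[Z] chi, zeta] != 0.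
Proof.
move=> /irrP[i ->] Lz ->; rewrite cfdotZl irrWnorm ?lin_char_irr // mulr1.
exact: irr1_neq0.
Qed.

(* On [Z] both characters are positive multiples of [zeta], and [phi] vanishes
   elsewhere, so ['[chi, phi]] is a positive multiple of [#|Z|]. *)
Lemma homogeneous_vanish_irr_eq M Z (chi phi : 'CF(M)) (zeta : 'CF(Z)) :
  Z \subset M -> zeta \is a linear_char -> chi \in irr M -> phi \in irr M ->
  homogeneous zeta chi -> homogeneous zeta phi ->
  {in M, forall x, x \notin Z -> phi x = 0} -> chi = phi.
Proof.
move=> sZM Lz /irrP[a ->] /irrP[b ->] chi_zeta phi_zeta phi0.
suff : '['chi_a, 'chi_b] != 0 by rewrite cfdot_irr pnatr_eq0 eqb0 negbK => /eqP->.
rewrite cfdotE mulf_eq0 negb_or invr_eq0 neq0CG /=.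
rewrite (big_setID Z) /= (setIidPr sZM) [X in _ + X]big1 ?addr0; last first.
  by move=> x /setDP[Mx Zx]; rewrite phi0 // conjC0 mulr0.
rewrite (eq_bigr (fun=> 'chi_a 1%g * 'chi_b 1%g)) ?sumr_const; last first.
  move=> x Zx; rewrite -!(cfResE _ sZM Zx) chi_zeta phi_zeta !cfunE rmorphM /=.
  rewrite mulrACA -normCK (normC_lin_char Lz Zx) expr1n mulr1.
  by rewrite (irr1_degree b) conjC_nat.
by rewrite mulrn_eq0 negb_or -lt0n cardG_gt0 mulf_neq0 ?irr1_neq0.
Qed.

Lemma homogeneous_invariant_Res H G (theta : 'CF(H)) (chi : 'CF(G)) :
  (H <| G)%g -> (G \subset 'I[theta])%g -> theta \is a linear_char -> chi \in irr G ->
  '['Res[H] chi, theta] != 0 -> homogeneous theta chi.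
Proof.
move=> nsHG sGI Lt /irrP[i ->]; have /irrP[k Dk] := lin_char_irr Lt.
rewrite Dk => chi_theta.
have DRes := Clifford_Res_sum_cfclass nsHG chi_theta.
rewrite -Dk cfclass_invariant // big_seq1 in DRes.
have := congr1 (fun f : 'CF(H) => f 1%g) DRes.
rewrite cfRes1 cfunE (lin_char1 Lt) mulr1 => Dc.
by rewrite /homogeneous {1}DRes -Dk -Dc.
Qed.

Lemma Inertia_normal G N H (phi : 'CF(H)) :
  (N <| G)%g -> ('I_N[phi] <| 'I_G[phi])%g.
Proof.
move=> nsNG; have := normalGI (subsetIl G 'I[phi]%g) nsNG.
by rewrite setIAC (setIidPr (normal_sub nsNG)).
Qed.

Lemma cfInd1_irr_neq0 G N (psi : 'CF(N)) :
  N \subset G -> psi \in irr N -> 'Ind[G] psi 1%g != 0.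
Proof.
move=> sNG /irrP[i ->]; rewrite cfInd1 // mulf_eq0 negb_or irr1_neq0 andbT.
by rewrite pnatr_eq0 -lt0n indexg_gt0.
Qed.

Lemma lin_char_commg_inertia Z (zeta : 'CF(Z)) z g :
  zeta \is a linear_char -> z \in Z -> g \in 'I[zeta]%g -> zeta [~ z, g]%g = 1.
Proof.
move=> Lz Zz Ig; have nZg := subsetP (norm_inertia zeta) g Ig.
rewrite commgEl lin_charM ?groupV ?memJ_norm // inertia_valJ //.
by rewrite -lin_charM ?groupV // mulVg lin_char1.
Qed.

Lemma cfInd_homogeneous_val G N Y (psi : 'CF(N)) (nu : 'CF(Y)) y :
  (Y <| G)%g -> Y \subset N -> N \subset G -> (G \subset 'I[nu])%g ->
  homogeneous nu psi -> y \in Y -> 'Ind[G] psi y = 'Ind[G] psi 1%g * nu y.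
Proof.
move=> /andP[sYG nYG] sYN sNG sGI Dpsi Yy.
rewrite !cfIndE // -mulrA; congr (_ * _); rewrite mulr_suml.
apply: eq_bigr => g Gg; rewrite conj1g.
have Yyg : (y ^ g)%g \in Y by rewrite memJ_norm // (subsetP nYG).
rewrite -(cfResE psi sYN Yyg) Dpsi cfunE; congr (_ * _).
exact: inertia_valJ (subsetP sGI g Gg).
Qed.

Lemma homogeneous_sub_cfcenter_Ind G N Y (psi : 'CF(N)) (nu : 'CF(Y)) :
  psi \is a character -> nu \is a linear_char ->
  (Y <| G)%g -> Y \subset N -> N \subset G -> (G \subset 'I[nu])%g ->
  homogeneous nu psi -> Y \subset 'Z('Ind[G] psi)%CF.
Proof.
move=> Npsi Lnu nsYG sYN sNG sGI Dpsi; apply/subsetP=> y Yy.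
have Gy : y \in G by rewrite (subsetP (subset_trans sYN sNG)).
rewrite char_cfcenterE ?cfInd_char // (cfInd_homogeneous_val nsYG sYN sNG sGI Dpsi Yy).
by rewrite normrM (normC_lin_char Lnu Yy) mulr1 ger0_norm // char1_ge0 ?cfInd_char.
Qed.

End Homogeneous.

Definition central_char (gT : finGroupType) (G : {group gT}) (X : 'CF(G))
    (zeta : 'CF('Z(X)%CF)) : Prop :=
  zeta \is a linear_char /\ homogeneous zeta X.
Arguments central_char {gT G} X zeta.

Section CentralCharacter.
Variable gT : finGroupType.
Implicit Types G N Y : {group gT}.

Lemma central_char_exists G (X : 'CF(G)) :
  exists zeta : 'CF('Z(X)%CF), central_char X zeta.
Proof. by have [zeta Lzeta Dzeta] := cfcenter_Res X; exists zeta. Qed.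

Lemma central_charP G (X : 'CF(G)) (zeta : 'CF('Z(X)%CF)) :
  X \is a character -> zeta \is a linear_char ->
  '['Res['Z(X)%CF] X, zeta] != 0 -> central_char X zeta.
Proof.
move=> NX Lz X_zeta; split=> //; have [c Lc Dc] := cfcenter_Res X.
have /irrP[k Dk] := lin_char_irr Lz.
have: k \in irr_constt ('Res['Z(X)%CF] X) by rewrite irr_consttE -Dk.
by rewrite /homogeneous Dc => /(constt_scale_lin Lc); rewrite -Dk => ->.
Qed.

Lemma cfcenter_Ind_sub G N (psi : 'CF(N)) :
  (N <| G)%g -> psi \in irr N -> 'Z('Ind[G] psi)%CF \subset N.
Proof.
move=> /andP[sNG nNG] irr_psi; apply/subsetP=> z Zz.
have Gz : z \in G := subsetP (cfcenter_sub _) z Zz.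
apply: contraLR Zz => Nz.
rewrite char_cfcenterE ?cfInd_char ?irrWchar // eq_sym.
have -> : 'Ind[G] psi z = 0.
  rewrite cfIndE // big1 ?mulr0 // => y Gy; apply: cfun0.
  by rewrite memJ_norm // (subsetP nNG).
by rewrite normr0 cfInd1_irr_neq0.
Qed.

Section Induced.
Variables (G N : {group gT}) (psi : 'CF(N)) (zeta : 'CF('Z('Ind[G] psi)%CF)).
Hypotheses (nsNG : (N <| G)%g) (irr_psi : psi \in irr N).
Hypothesis central_zeta : central_char ('Ind[G] psi) zeta.

Lemma central_char_inertia : (G \subset 'I[zeta])%g.
Proof.
have [_ Dzeta] := central_zeta; apply/subsetP=> g Gg.
have nZg : g \in 'N('Z('Ind[G] psi)%CF)%g.
  exact: subsetP (normal_norm (cfcenter_normal _)) g Gg.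
rewrite inE nZg /=; apply/eqP.
have DResg : ('Res['Z('Ind[G] psi)%CF] ('Ind[G] psi) ^ g)%CF
             = 'Res['Z('Ind[G] psi)%CF] ('Ind[G] psi).
  by rewrite (cfConjgRes_norm _ nZg (subsetP (normG G) g Gg)) cfConjg_id.
move: DResg; rewrite Dzeta linearZ /=.
exact: scalerI (cfInd1_irr_neq0 (normal_sub nsNG) irr_psi) _ _.
Qed.

Lemma central_char_homogeneous : homogeneous zeta psi.
Proof.
have [Lz Dzeta] := central_zeta; have /irrP[j Dj] := irr_psi.
have psi_j : j \in irr_constt ('Res[N] ('Ind[G] psi)).
  rewrite irr_consttE cfdot_Res_l {1}Dj cfnorm_eq0.
  exact: Ind_irr_neq0 (normal_sub nsNG).
have := homogeneous_constt_Res (cfInd_char G (irrWchar irr_psi))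
  (cfcenter_Ind_sub nsNG irr_psi) (normal_sub nsNG) Lz Dzeta psi_j.
by rewrite -Dj.
Qed.

Lemma central_char_Res Y (nu : 'CF(Y)) :
  nu \is a linear_char -> (Y <| G)%g -> Y \subset N -> (G \subset 'I[nu])%g ->
  homogeneous nu psi -> Y \subset 'Z('Ind[G] psi)%CF /\ 'Res[Y] zeta = nu.
Proof.
move=> Lnu nsYG sYN sGI Dpsi; have sNG := normal_sub nsNG.
have sYZ := homogeneous_sub_cfcenter_Ind (irrWchar irr_psi) Lnu nsYG sYN sNG sGI Dpsi.
split=> //; apply/cfun_inP=> y Yy.
have := cfInd_homogeneous_val nsYG sYN sNG sGI Dpsi Yy.
rewrite -(cfResE _ (cfcenter_sub _) (subsetP sYZ y Yy)) central_zeta.2 cfunE.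
by rewrite (cfResE _ sYZ Yy) => /(mulfI (cfInd1_irr_neq0 sNG irr_psi)).
Qed.

Lemma central_char_constt_homogeneous chi : chi \in irr N ->
  '['Res['Z('Ind[G] psi)%CF] chi, zeta] != 0 -> homogeneous zeta chi.
Proof.
have sNG := normal_sub nsNG; have sZN := cfcenter_Ind_sub nsNG irr_psi.
apply: homogeneous_invariant_Res (normalS sZN sNG (cfcenter_normal _)) _ central_zeta.1.
exact: subset_trans sNG central_char_inertia.
Qed.

End Induced.

End CentralCharacter.

Section LinearReductionInvariant.
Variable gT : finGroupType.

(* Quantifying over all extensions [nu] of [zeta], not just [zeta] itself, is
   what lets the bound pass down a chain of reductions, whose centres grow. *)
Definition inertia_bound (G0 G1 Z : {group gT}) (zeta : 'CF(Z)) : Prop :=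
  forall (Y : {group gT}) (nu : 'CF(Y)),
    Z \subset Y -> 'Res[Z] nu = zeta -> ('I_G0[nu] \subset G1)%g.

Definition Ind_unique (N0 N1 Z : {group gT}) (zeta : 'CF(Z))
    (psi0 : 'CF(N0)) (psi1 : 'CF(N1)) : Prop :=
  forall chi : 'CF(N1), chi \in irr N1 -> homogeneous zeta chi ->
    'Ind[N0] chi = psi0 -> chi = psi1.

Section DirectLinearReduction.
Variables (G N L : {group gT}) (t : Iirr L) (psi : 'CF(N)) (psi' : 'CF('I_N['chi_t])).
Hypotheses (nsNG : (N <| G)%g) (irr_psi : psi \in irr N).
Hypotheses (nsLG : (L <| G)%g) (sLN : L \subset N) (lin_t : 'chi_t \is a linear_char).
Hypotheses (psi_t : '['Res[L] psi, 'chi_t] != 0) (irr_psi' : psi' \in irr 'I_N['chi_t]).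
Hypotheses (psi'_t : '['Res[L] psi', 'chi_t] != 0) (Ind_psi' : 'Ind[N] psi' = psi).

Local Notation G' := 'I_G['chi_t]%G.
Local Notation N' := 'I_N['chi_t]%G.
Local Notation Z := ('Z('Ind[G] psi)%CF)%G.
Local Notation Z' := ('Z('Ind[G'] psi')%CF)%G.

Let sNG : N \subset G := normal_sub nsNG.
Let sN'N : N' \subset N := subsetIl _ _.
Let sG'G : G' \subset G := subsetIl _ _.
Let sG'I : (G' \subset 'I['chi_t])%g := subsetIr _ _.
Let sN'G' : N' \subset G' := setSI _ sNG.
Let sLN' : L \subset N'. Proof. by rewrite subsetI sLN sub_inertia. Qed.
Let nsLN' : (L <| N')%g := normalS sLN' (subset_trans sN'N sNG) nsLG.
Let nsLG' : (L <| G')%g := normalS (subset_trans sLN' sN'G') sG'G nsLG.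
Let nsLN : (L <| N)%g := normalS sLN sNG nsLG.

Let nsN'G' : (N' <| G')%g := Inertia_normal 'chi_t nsNG.

Let homogeneous_psi' : homogeneous 'chi_t psi'.
Proof.
exact: homogeneous_invariant_Res nsLN' (subset_trans sN'G' sG'I) lin_t irr_psi' psi'_t.
Qed.

Lemma linred_center_lin zeta' : central_char ('Ind[G'] psi') zeta' ->
  L \subset Z' /\ 'Res[L] zeta' = 'chi_t.
Proof. by move/central_char_Res; apply. Qed.

(* [Z] centralises [L] modulo the kernel of [chi_t], because [chi_t] and the
   central character agree on [L :&: Z] and the latter is [G]-invariant. *)
Lemma cfcenter_sub_Inertia zeta : central_char ('Ind[G] psi) zeta -> Z \subset N'.
Proof.
move=> central_zeta; have [Lz Dzeta] := central_zeta.
have sZN := cfcenter_Ind_sub nsNG irr_psi.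
have sGI := central_char_inertia nsNG irr_psi central_zeta.
have [nLG nZG] := (normal_norm nsLG, normal_norm (cfcenter_normal ('Ind[G] psi))).
have sLZ_L : (L :&: Z)%G \subset L := subsetIl _ _.
have chi_t_LZ : 'Res[(L :&: Z)%G] 'chi_t = 'Res[(L :&: Z)%G] zeta.
  have Dpsi : homogeneous ('Res[(L :&: Z)%G] zeta) psi.
    rewrite /homogeneous -(cfResRes psi (subsetIr L _) sZN).
    by rewrite (central_char_homogeneous nsNG irr_psi central_zeta) linearZ.
  have := homogeneous_constt_Res (irrWchar irr_psi) sLZ_L sLN (cfRes_lin_char _ Lz)
    Dpsi psi_t.
  by rewrite /homogeneous (lin_char1 lin_t) scale1r.
apply/subsetP=> z Zz; have Gz := subsetP (cfcenter_sub _) z Zz.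
rewrite inE (subsetP sZN z Zz) inE (subsetP nLG z Gz) /=.
apply/eqP/cfun_inP=> l Ll; have Gl := subsetP (subset_trans sLN sNG) l Ll.
rewrite cfConjgE ?(subsetP nLG) // conjg_mulR.
have L_lz : [~ l, z^-1]%g \in L.
  by rewrite commgEl groupM ?groupV // memJ_norm ?groupV ?(subsetP nLG).
have Z_zl : [~ z^-1, l]%g \in Z.
  by rewrite commgEl groupM ?memJ_norm ?groupV ?(subsetP nZG).
have LZ_lz : [~ l, z^-1]%g \in (L :&: Z)%G by rewrite inE L_lz -invgR groupV.
rewrite lin_charM // -(cfResE 'chi_t sLZ_L LZ_lz) chi_t_LZ cfResE ?subsetIr //.
rewrite -invgR lin_charV ?lin_char_commg_inertia ?groupV ?(subsetP sGI) //.
by rewrite invr1 mulr1.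
Qed.

Lemma linred_center_sub zeta zeta' :
  central_char ('Ind[G] psi) zeta -> central_char ('Ind[G'] psi') zeta' ->
  Z \subset Z' /\ 'Res[Z] zeta' = zeta.
Proof.
move=> central_zeta central_zeta'; have [Lz _] := central_zeta.
have sZN' := cfcenter_sub_Inertia central_zeta.
have sGI := central_char_inertia nsNG irr_psi central_zeta.
have nsZG' : (Z <| G')%g.
  exact: normalS (subset_trans sZN' sN'G') sG'G (cfcenter_normal _).
have psi'_zeta : homogeneous zeta psi'.
  have /irrP[j Dj] := irr_psi'.
  have psi_j : j \in irr_constt ('Res[N'] psi).
    by rewrite irr_consttE cfdot_Res_l -Dj Ind_psi' irrWnorm ?oner_eq0.
  have := homogeneous_constt_Res (irrWchar irr_psi) sZN' sN'N Lz
    (central_char_homogeneous nsNG irr_psi central_zeta) psi_j.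
  by rewrite -Dj.
by have [] := central_char_Res nsN'G' irr_psi' central_zeta' Lz nsZG' sZN'
  (subset_trans sG'G sGI) psi'_zeta.
Qed.

Lemma linred_inertia_bound G0 zeta zeta' :
  central_char ('Ind[G] psi) zeta -> central_char ('Ind[G'] psi') zeta' ->
  inertia_bound G0 G zeta -> inertia_bound G0 G' zeta'.
Proof.
move=> central_zeta central_zeta' boundG Y nu sZ'Y Dnu.
have [sZZ' Dzeta] := linred_center_sub central_zeta central_zeta'.
have [sLZ' Dt] := linred_center_lin central_zeta'.
have sIG : ('I_G0[nu] \subset G)%g.
  by apply: boundG (subset_trans sZZ' sZ'Y) _; rewrite -(cfResRes nu sZZ' sZ'Y) Dnu.
apply/subsetP=> g Ig; have Gg := subsetP sIG g Ig.
have /setIP[_ Inu_g] := Ig; have nYg := subsetP (norm_inertia nu) g Inu_g.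
have nLg := subsetP (normal_norm nsLG) g Gg.
rewrite inE Gg inE nLg /=; apply/eqP.
have <- : 'Res[L] nu = 'chi_t by rewrite -(cfResRes nu sLZ' sZ'Y) Dnu.
by rewrite cfConjgRes_norm // inertiaJ.
Qed.

Let Inertia_constt s : homogeneous 'chi_t 'chi_s ->
  s \in irr_constt ('Ind[N'] 'chi_t).
Proof.
move=> Ds; rewrite constt_Ind_Res irr_consttE Ds cfdotZl cfdot_irr eqxx mulr1.
exact: irr1_neq0.
Qed.

(* Clifford correspondence: [Ind[N]] is injective on the irreducible characters
   of [N'] over [chi_t]. *)
Lemma linred_Ind_unique (N0 : {group gT}) (psi0 : 'CF(N0)) zeta zeta' : N \subset N0 ->
  central_char ('Ind[G] psi) zeta -> central_char ('Ind[G'] psi') zeta' ->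
  Ind_unique zeta psi0 psi -> Ind_unique zeta' psi0 psi'.
Proof.
move=> sNN0 central_zeta central_zeta' uniq_psi chi irr_chi chi_zeta' Ind_chi.
have [sZZ' Dzeta] := linred_center_sub central_zeta central_zeta'.
have [sLZ' Dt] := linred_center_lin central_zeta'.
have sZ'N' := cfcenter_Ind_sub nsN'G' irr_psi'.
have chi_res (Y : {group gT}) (nu : 'CF(Y)) :
    Y \subset Z' -> 'Res[Y] zeta' = nu -> homogeneous nu chi.
  by move=> sYZ' <-; rewrite /homogeneous -(cfResRes chi sYZ' sZ'N') chi_zeta' linearZ.
have sGI := central_char_inertia nsNG irr_psi central_zeta.
have sZN' := subset_trans sZZ' sZ'N'.
have nsZN : (Z <| N)%g := normalS (subset_trans sZN' sN'N) sNG (cfcenter_normal _).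
have [Ind_irr Ind_inj _ _ _] := constt_Inertia_bijection t nsLN.
have /irrP[s Ds] := irr_chi; have /irrP[s' Ds'] := irr_psi'.
have Ind_chi_psi : 'Ind[N] chi = psi.
  apply: uniq_psi.
  - by rewrite Ds; apply/Ind_irr/Inertia_constt; rewrite -Ds; apply: chi_res sLZ' Dt.
  - rewrite /homogeneous; apply/cfun_inP=> z Zz.
    rewrite cfResE ?(subset_trans sZN' sN'N) // !cfunE.
    exact: cfInd_homogeneous_val nsZN sZN' sN'N (subset_trans sNG sGI)
      (chi_res _ _ sZZ' Dzeta) Zz.
  - by rewrite cfIndInd.
suff Ds_s' : s = s' by rewrite Ds Ds_s' Ds'.
apply: Ind_inj; rewrite ?Inertia_constt -?Ds -?Ds' //; first exact: chi_res sLZ' Dt.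
by rewrite /Ind_Iirr -Ds -Ds' Ind_chi_psi Ind_psi'.
Qed.

End DirectLinearReduction.

Definition linred_inv (T T' : triple gT) : Prop :=
  [/\ is_triple T', tG T' \subset tG T, tN T' :=: tN T :&: tG T',
      'Ind[tN T] (tpsi T') = tpsi T &
      forall zeta : 'CF(tcenter T'), central_char ('Ind[tG T'] (tpsi T')) zeta ->
        inertia_bound (tG T) (tG T') zeta /\ Ind_unique zeta (tpsi T) (tpsi T')].

Lemma linred_inv_refl (T : triple gT) : is_triple T -> linred_inv T T.
Proof.
move=> T_triple; split=> //.
- by rewrite (setIidPl (normal_sub T_triple.1)).
- exact: cfInd_id.
by move=> zeta _; split=> [Y nu _ _ | chi _ _]; [apply: subsetIl | rewrite cfInd_id].
Qed.

Lemma linred_inv_step (T T1 T2 : triple gT) :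
  linred_inv T T1 -> direct_linred T1 T2 -> linred_inv T T2.
Proof.
case: T1 T2 => G1 N1 psi1 [G2 N2 psi2].
case=> [[/= nsN1G1 irr_psi1] /= sG1G DN1 Ind_psi1 inv1].
case=> L [lam [/= nsLG1 sLN1 lin_t psi1_t [/= DG2 DN2 irr_psi2 psi2_t Ind_psi2]]].
have /irrP[t Dt] := lin_char_irr lin_t; subst lam.
move/group_inj: DG2 => ->; move/group_inj: DN2 => DN2; subst N2.
have sN1N : N1 \subset tN T by rewrite DN1 subsetIl.
split=> /=.
- by split=> //; apply: Inertia_normal.
- exact: subset_trans (subsetIl _ _) sG1G.
- by rewrite DN1 -setIA.
- by rewrite -(cfIndInd _ sN1N (subsetIl _ _)) Ind_psi2.
move=> zeta2 central_zeta2.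
have [zeta1 central_zeta1] := central_char_exists ('Ind[G1] psi1).
have [bound1 uniq1] := inv1 zeta1 central_zeta1.
split.
- exact: (linred_inertia_bound nsN1G1 irr_psi1 nsLG1 sLN1 lin_t psi1_t irr_psi2
    psi2_t Ind_psi2 central_zeta1 central_zeta2 bound1).
exact: (linred_Ind_unique nsN1G1 irr_psi1 nsLG1 sLN1 lin_t psi1_t irr_psi2
  psi2_t Ind_psi2 sN1N central_zeta1 central_zeta2 uniq1).
Qed.

Lemma linred_invariant (T T' : triple gT) :
  is_triple T -> linred T T' -> linred_inv T T'.
Proof.
move=> T_triple; elim=> [|T1 T2 _ inv1]; first exact: linred_inv_refl.
exact: linred_inv_step.
Qed.

End LinearReductionInvariant.

Section CentraliserModulo.
Variable gT : finGroupType.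
Implicit Types (A B C : {set gT}) (G H K M Z : {group gT}).

Definition centr_mod A B C := [set a in A | [forall b in B, [~ a, b]%g \in C]].

Lemma centr_modP A B C a :
  reflect (a \in A /\ forall b, b \in B -> [~ a, b]%g \in C) (a \in centr_mod A B C).
Proof.
by rewrite inE; apply: (iffP andP) => [[-> /forall_inP] | [-> /forall_inP]].
Qed.

Lemma centr_mod_sub A B C : centr_mod A B C \subset A.
Proof. by apply/subsetP=> a /centr_modP[]. Qed.

Lemma group_set_centr_mod H B K : H \subset 'N(K)%g -> group_set (centr_mod H B K).
Proof.
move=> nKH; apply/group_setP; split.
  by apply/centr_modP; split=> // b _; rewrite comm1g.
move=> a a' /centr_modP[Ha Ka] /centr_modP[Ha' Ka']; apply/centr_modP.
split=> [|b Bb]; first exact: groupM.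
by rewrite commMgJ groupM ?Ka' // memJ_norm ?Ka // (subsetP nKH).
Qed.

Lemma centr_mod_normal G H B K : (H <| G)%g -> G \subset 'N(B)%g ->
  G \subset 'N(K)%g -> (centr_mod H B K <| G)%g.
Proof.
move=> /andP[sHG nHG] nBG nKG.
apply/andP; split; first exact: subset_trans (centr_mod_sub _ _ _) sHG.
apply/subsetP=> g Gg.
have nHg := subsetP nHG g Gg; have nBg := subsetP nBG g Gg.
have nKg := subsetP nKG g Gg.
apply/normP/eqP; rewrite eqEcard cardJg leqnn andbT.
apply/subsetP=> _ /imsetP[a /centr_modP[Ha Ka] ->]; apply/centr_modP.
split=> [|b Bb]; first by rewrite memJ_norm.
by rewrite -(conjgKV g b) -conjRg memJ_norm ?Ka // -mem_conjg (normP nBg).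
Qed.

Lemma nilpotent_centr_mod M Z : M \subset 'N(Z)%g -> nilpotent (M / Z)%g ->
  ~~ (M \subset Z) -> exists2 k, k \in centr_mod M M Z & k \notin Z.
Proof.
move=> nZM nilMZ /subsetPn[x Mx Zx].
have ntMZ : (M / Z)%g != 1%g.
  apply/trivgPn; exists (coset Z x); first exact: mem_quotient.
  by apply: contra Zx => /eqP/coset_idr->; rewrite ?(subsetP nZM).
have ntZMZ : 'Z(M / Z)%g != 1%g by rewrite center_nil_eq1.
have [_ /centerP[/morphimP[k Nk Mk ->] cMZk] ntk] := trivgPn _ ntZMZ.
exists k; last by apply: contra ntk => Zk; rewrite /= coset_id.
apply/centr_modP; split=> // m Mm; have Nm := subsetP nZM m Mm.
apply: coset_idr; first by rewrite groupR.
by rewrite morphR //=; apply/eqP/commgP/cMZk/mem_quotient.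
Qed.

End CentraliserModulo.

Definition normal_lin_constt_sub (gT : finGroupType) (G Z M : {group gT})
    (phi : 'CF(M)) : Prop :=
  forall L : {group gT}, (L <| G)%g -> L \subset M ->
  forall lam : 'CF(L), lam \is a linear_char -> '['Res[L] phi, lam] != 0 ->
  L \subset Z.

Section Vanishing.
Variable gT : finGroupType.
Variables (G Z : {group gT}) (zeta : 'CF(Z)).
Hypotheses (nsZG : (Z <| G)%g) (lin_zeta : zeta \is a linear_char).
Hypothesis sGI : (G \subset 'I[zeta])%g.

Let sDZ : cfker zeta \subset Z := cfker_sub zeta.

Let nDG : G \subset 'N(cfker zeta)%g.
Proof.
apply/subsetP=> g Gg; apply/normP.
rewrite -(cfker_conjg _ (subsetP (normal_norm nsZG) g Gg)).
by rewrite (inertiaJ (subsetP sGI g Gg)).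
Qed.

Let cfker_zeta z : z \in Z -> (z \in cfker zeta) = (zeta z == 1).
Proof. by move=> Zz; rewrite cfkerEchar ?lin_charW // inE Zz lin_char1. Qed.

Let commg_cfker z g : z \in Z -> g \in G -> [~ z, g]%g \in cfker zeta.
Proof.
move=> Zz Gg; have Zzg : [~ z, g]%g \in Z.
  by rewrite commgEl groupM ?groupV // memJ_norm ?(subsetP (normal_norm nsZG)).
by rewrite cfker_zeta // lin_char_commg_inertia ?(subsetP sGI).
Qed.

Section Step.
Variables (M : {group gT}) (phi : 'CF(M)).
Hypotheses (nsMG : (M <| G)%g) (sZM : Z \subset M) (irr_phi : phi \in irr M).
Hypotheses (phi_zeta : homogeneous zeta phi) (phi_lin : normal_lin_constt_sub G Z phi).

Lemma lin_constt_der1_sub (R : {group gT}) : (R <| G)%g -> R \subset M ->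
  cfker zeta \subset R -> (R^`(1) \subset cfker zeta)%g -> R \subset Z.
Proof.
move=> nsRG sRM sDR sR'D; have /irrP[j Dj] := irr_phi.
have [i phi_i] := constt_cfRes_irr R j.
apply: (phi_lin nsRG sRM (lam := 'chi_i)); last by rewrite Dj -irr_consttE.
have phi_D : homogeneous ('Res[cfker zeta] zeta) phi.
  by rewrite /homogeneous -(cfResRes phi sDZ sZM) phi_zeta linearZ.
have := homogeneous_constt_Res (irrWchar irr_phi) sDR sRM
  (cfRes_lin_char _ lin_zeta) phi_D.
rewrite Dj => /(_ i phi_i) chi_i_D.
rewrite lin_irr_der1; apply: subset_trans sR'D _; apply/subsetP=> d Dd.
rewrite cfkerEirr inE -(cfResE _ sDR Dd) chi_i_D cfunE cfResE //.
by rewrite (cfker1 Dd) (lin_char1 lin_zeta) mulr1.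
Qed.

(* With [D] the kernel of [zeta]: [K/Z] is the centre of [M/Z]; [R/D] is the
   part of [K/D] central in [M/D], whose constituents are linear, so [R <= Z];
   [U/D] is the centraliser of [K/D] in [M/D], which excludes a [k0] in
   [K :\: Z]; and off [U] some [k] in [K] gives [phi x = zeta [~ x, k] * phi x]
   with [zeta [~ x, k] != 1]. *)
Lemma vanishing_step : nilpotent (M / Z)%g -> ~~ (M \subset Z) ->
  exists U : {group gT},
    [/\ (U <| G)%g, Z \subset U, U \proper M &
         {in M, forall x, x \notin U -> phi x = 0}].
Proof.
move=> nilMZ not_sMZ; have [sMG nMG] := andP nsMG.
have nZM := subset_trans sMG (normal_norm nsZG); have nDM := subset_trans sMG nDG.
pose K := Group (group_set_centr_mod M nZM).
have sKM : K \subset M := centr_mod_sub _ _ _.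
have nsKG : (K <| G)%g := centr_mod_normal nsMG nMG (normal_norm nsZG).
pose R := Group (group_set_centr_mod M (subset_trans sKM nDM)).
have sRK : R \subset K := centr_mod_sub _ _ _.
have nsRG : (R <| G)%g := centr_mod_normal nsKG nMG nDG.
pose U := Group (group_set_centr_mod K nDM).
have sUM : U \subset M := centr_mod_sub _ _ _.
have sRZ : R \subset Z.
  apply: lin_constt_der1_sub nsRG (subset_trans sRK sKM) _ _.
    apply/subsetP=> d Dd; have Zd := subsetP sDZ d Dd.
    have commg_d m : m \in M -> [~ d, m]%g \in cfker zeta.
      by move=> Mm; rewrite commg_cfker ?(subsetP sMG).
    apply/centr_modP; split=> //; apply/centr_modP.
    split=> [|m /commg_d/(subsetP sDZ)] //.
    exact: subsetP sZM d Zd.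
  rewrite gen_subG; apply/subsetP=> _ /imset2P[r r' /centr_modP[_ Dr] Rr' ->].
  exact/Dr/(subsetP (subset_trans sRK sKM)).
exists U; split=> //.
- exact: centr_mod_normal nsMG (normal_norm nsKG) nDG.
- apply/subsetP=> z Zz; apply/centr_modP.
  split=> [|k Kk]; first exact: subsetP sZM z Zz.
  exact/commg_cfker/(subsetP (subset_trans sKM sMG)).
- have [k0 Kk0 Zk0] := nilpotent_centr_mod nZM nilMZ not_sMZ.
  rewrite properEneq sUM andbT; apply: contraNneq Zk0 => DU.
  apply: (subsetP sRZ); apply/centr_modP; split=> // m Mm.
  have /centr_modP[_ /(_ k0 Kk0)] : m \in U by rewrite DU.
  by rewrite -invgR groupV.
move=> x Mx; rewrite inE Mx /= => /forall_inPn[k Kk D'xk].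
have Zxk : [~ x, k]%g \in Z.
  by have /centr_modP[_ /(_ x Mx)] := Kk; rewrite -invgR groupV.
have zeta_xk : zeta [~ x, k]%g != 1 by rewrite -cfker_zeta.
exact: homogeneous_commg_vanish (irrWchar irr_phi) sZM lin_zeta phi_zeta Mx
  (subsetP sKM k Kk) Zxk zeta_xk.
Qed.

End Step.

Lemma homogeneous_vanish_off (M : {group gT}) (phi : 'CF(M)) :
  (M <| G)%g -> Z \subset M -> nilpotent (M / Z)%g -> phi \in irr M ->
  homogeneous zeta phi -> normal_lin_constt_sub G Z phi ->
  {in M, forall x, x \notin Z -> phi x = 0}.
Proof.
move: {2}#|M| (leqnn #|M|) => n; elim: n M phi => [M|n IHn M] phi leMn.
  by rewrite leqNgt cardG_gt0 in leMn.
move=> nsMG sZM nilMZ irr_phi phi_zeta phi_lin x Mx Zx.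
have not_sMZ : ~~ (M \subset Z) by apply/subsetPn; exists x.
have [U [nsUG sZU ltUM vanishU]] :=
  vanishing_step nsMG sZM irr_phi phi_zeta phi_lin nilMZ not_sMZ.
have [Ux | /vanishU-> //] := boolP (x \in U); have sUM := proper_sub ltUM.
rewrite -(cfResE phi sUM Ux) [cfRes _ _]cfun_sum_constt sum_cfunE big1 // => i phi_i.
rewrite cfunE (IHn U 'chi_i) ?mulr0 ?mem_irr //.
- by rewrite -ltnS (leq_trans (proper_card ltUM)).
- exact: nilpotentS (quotientS Z sUM) nilMZ.
- exact: homogeneous_constt_Res (irrWchar irr_phi) sZU sUM lin_zeta phi_zeta phi_i.
move=> L nsLG sLU lam lin_lam i_lam.
apply: (phi_lin L nsLG (subset_trans sLU sUM) lam lin_lam).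
have /irrP[k Dk] := lin_char_irr lin_lam; rewrite Dk in i_lam *.
rewrite -irr_consttE -(cfResRes phi sLU sUM).
apply: (constt_Res_trans (cfRes_char U (irrWchar irr_phi)) phi_i).
by rewrite irr_consttE.
Qed.

End Vanishing.

(* Otherwise the Clifford correspondent of [tpsi T'] over [lam] would give a
   proper direct linear reduction; so [lam] is [tG T']-invariant and
   [tpsi T'] is homogeneous over it, which places [L] in the center. *)
Lemma linear_limit_lin_constt_sub (gT : finGroupType) (T T' : triple gT) :
  is_triple T' -> linear_limit T T' ->
  normal_lin_constt_sub (tG T') (tcenter T') (tpsi T').
Proof.
move=> [nsN'G' irr_psi'] [_ no_reduction] L nsLG' sLN' lam lin_lam psi'_lam.
have /irrP[t Dt] := lin_char_irr lin_lam; subst lam.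
have nsLN' : (L <| tN T')%g := normalS sLN' (normal_sub nsN'G') nsLG'.
have /irrP[r Dr] := irr_psi'.
have [Ind_irr _ Ind_onto _ _] := constt_Inertia_bijection t nsLN'.
have : r \in irr_constt ('Ind[tN T'] 'chi_t) by rewrite constt_Ind_Res -Dr irr_consttE.
rewrite -Ind_onto => /imsetP[s s_t Drs].
pose T'' := @Triple gT ('I_(tG T')['chi_t])%G ('I_(tN T')['chi_t])%G 'chi_s.
have /no_reduction DT'' : direct_linred T' T''.
  exists L, 'chi_t; split=> //; split=> //=; first exact: mem_irr.
    by move: s_t; rewrite constt_Ind_Res irr_consttE.
  by rewrite Dr Drs /Ind_Iirr cfIirrE // Ind_irr.
have sG'I : (tG T' \subset 'I['chi_t])%g by rewrite -DT'' subsetIr.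
have sN'I := subset_trans (normal_sub nsN'G') sG'I.
have psi'_t := homogeneous_invariant_Res nsLN' sN'I lin_lam irr_psi' psi'_lam.
exact: homogeneous_sub_cfcenter_Ind (irrWchar irr_psi') lin_lam nsLG' sLN'
  (normal_sub nsN'G') sG'I psi'_t.
Qed.

Theorem proposition3p7 (gT : finGroupType) (T T' : triple gT)
  (zeta : 'CF(tcenter T')) :
  is_triple T -> linred T T' ->
  zeta \is a linear_char -> lies_under zeta ('Ind[tG T'] (tpsi T')) ->
  [/\ tG T' :=: 'I_(tG T)[zeta]%g,
      tN T' :=: 'I_(tN T)[zeta]%g,
      [/\ tpsi T' \in irr (tN T'), lies_under zeta (tpsi T'),
          'Ind[tN T] (tpsi T') = tpsi T &
          forall chi : 'CF(tN T'), chi \in irr (tN T') ->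
            lies_under zeta chi -> 'Ind[tN T] chi = tpsi T -> chi = tpsi T'] &
      (linear_limit T T' -> nilpotent (tN T' / tcenter T')%g ->
       forall chi : 'CF(tN T'), chi \in irr (tN T') ->
         lies_under zeta chi -> chi = tpsi T')].
Proof.
move=> T_triple linred_T' lin_zeta zeta_psi'G.
have [[nsN'G' irr_psi'] sG'G DN' Ind_psi' inv_T'] :=
  linred_invariant T_triple linred_T'.
have central_zeta : central_char ('Ind[tG T'] (tpsi T')) zeta.
  exact: central_charP (cfInd_char _ (irrWchar irr_psi')) lin_zeta zeta_psi'G.
have [bound_G' unique_psi'] := inv_T' zeta central_zeta.
have sG'I := central_char_inertia nsN'G' irr_psi' central_zeta.
have psi'_zeta := central_char_homogeneous nsN'G' irr_psi' central_zeta.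
have homog := central_char_constt_homogeneous nsN'G' irr_psi' central_zeta.
have sZN' := cfcenter_Ind_sub nsN'G' irr_psi'.
have DG' : tG T' :=: 'I_(tG T)[zeta]%g.
  apply/eqP; rewrite eqEsubset subsetI sG'G sG'I.
  exact: bound_G' _ zeta (subxx _) (cfRes_id _).
split=> //.
- by rewrite DN' DG' setIA (setIidPl (normal_sub T_triple.1)).
- split=> // [|chi irr_chi /(homog _ irr_chi)]; last exact: unique_psi'.
  exact: homogeneous_cfdot_neq0 irr_psi' lin_zeta psi'_zeta.
move=> limit_T' nil_N'Z chi irr_chi /(homog _ irr_chi) chi_zeta.
have psi'_lin := linear_limit_lin_constt_sub (conj nsN'G' irr_psi') limit_T'.
have psi'_vanish := homogeneous_vanish_off (cfcenter_normal _) lin_zeta sG'I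
  nsN'G' sZN' nil_N'Z irr_psi' psi'_zeta psi'_lin.
exact: homogeneous_vanish_irr_eq sZN' lin_zeta irr_chi irr_psi' chi_zeta
  psi'_zeta psi'_vanish.
Qed.
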